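(* Let $1\le k\le 6$, let $\theta\in(\pi/2,\pi)$ be sufficiently close to $\pi/2$ and $\kappa>0$. For each integer $l\in\{0,1,\dots,2k\}$ there is a constant $c>0$, independent of $\tau>0$ and of $z$, such that for all $\tau>0$ and all $z\in\Gamma^\tau_{\theta,\kappa}$: $$\left|\frac{\gamma_l(e^{-z\tau})}{l!}\tau^{l+1}-\frac{1}{z^{l+1}}\right|\le\begin{cases} c\,\tau^{l+1}, & l=0 \text{ or } l\in\{1,3,\dots,2k-1\},\\ c\,\tau^{l+2}|z|, & l\in\{2,4,\dots,2k\}.\end{cases}$$
   Context: For real $p\ge 0$ let $\gamma_p(\xi)=\sum_{n=1}^\infty n^p\xi^n$ for $|\xi|<1$ (extended analytically, e.g. $\gamma_l(\xi)$ is a rational function of $\xi$ with only pole at $\xi=1$ for integer $l$). For $\theta\in(\pi/2,\pi)$ and $\kappa>0$, $\Gamma_{\theta,\kappa}=\{z\in\mathbb C:|z|=\kappa,|\arg z|\le\theta\}\cup\{z=re^{\pm i\theta}:r\ge\kappa\}$, and for $\tau>0$, $\Gamma^\tau_{\theta,\kappa}=\{z\in\Gamma_{\theta,\kappa}:|\operatorname{Im}z|\le\pi/\tau\}$. *)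

From Stdlib Require Import Reals List Factorial.
From Coquelicot Require Import Coquelicot.
Open Scope R_scope.

Definition Cexp (z : C) : C :=
  (exp (fst z) * cos (snd z), exp (fst z) * sin (snd z)).

(* Real polynomials as coefficient lists, lowest degree first. *)
Fixpoint peval (p : list R) (x : C) : C :=
  match p with
  | nil => RtoC 0
  | a :: t => Cplus (RtoC a) (Cmult x (peval t x))
  end.

Fixpoint padd (p q : list R) : list R :=
  match p, q with
  | nil, _ => q
  | _, nil => p
  | a :: p', b :: q' => (a + b) :: padd p' q'
  end.

Definition pscale (c : R) (p : list R) : list R := map (fun a => c * a) p.

Definition pmulX (p : list R) : list R := 0 :: p.

Fixpoint pderiv_aux (k : nat) (p : list R) : list R :=
  match p with
  | nil => nil
  | a :: t => (INR k * a) :: pderiv_aux (S k) t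
  end.

Definition pderiv (p : list R) : list R :=
  match p with
  | nil => nil
  | _ :: t => pderiv_aux 1 t
  end.

(* Numerator polynomials: gamma_l(xi) = P_l(xi) / (1 - xi)^(l+1), where
   P_0 = X and P_{l+1} = X * ( P_l' * (1 - X) + (l+1) * P_l ),
   which is the identity gamma_{l+1} = xi * d/dxi gamma_l, gamma_0 = xi/(1-xi). *)
Fixpoint gammaNum (l : nat) : list R :=
  match l with
  | O => 0 :: 1 :: nil
  | S l' =>
      pmulX (padd (padd (pderiv (gammaNum l')) (pscale (-1) (pmulX (pderiv (gammaNum l')))))
                  (pscale (INR (S l')) (gammaNum l')))
  end.

(* gamma_l(xi) = sum_{n>=1} n^l xi^n for |xi| < 1, as the rational function
   on C with only pole at xi = 1. *)
Definition gamma (l : nat) (xi : C) : C :=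
  Cdiv (peval (gammaNum l) xi) (Cpow (Cminus (RtoC 1) xi) (S l)).

Definition GammaC (theta kappa : R) (z : C) : Prop :=
  (exists phi, Rabs phi <= theta /\ z = (kappa * cos phi, kappa * sin phi)) \/
  (exists r, kappa <= r /\ (z = (r * cos theta, r * sin theta) \/
                             z = (r * cos theta, - (r * sin theta)))).

Definition GammaCtau (theta kappa tau : R) (z : C) : Prop :=
  GammaC theta kappa z /\ Rabs (snd z) <= PI / tau.

(* With w = tau z the left-hand side is tau^(l+1) |F_l(w)|, where
   F_l(w) = gamma_l(e^(-w))/l! - 1/w^(l+1).  The contour lies in the sector |arg z| <= theta,
   so w ranges over the half-strip |Im w| <= pi, Re w >= pi cot theta, w <> 0, and it
   suffices to bound |F_l| there by C (resp. C |w|):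
   - for |w| > 1/32 both terms of F_l are bounded, since |e^(-w)| is bounded and
     |1 - e^(-w)| is bounded below in the strip;
   - for |w| <= 1/32, writing gamma_l = P_l / (1 - xi)^(l+1),
     F_l(w) = N_l(w) / (l! (1 - e^(-w))^(l+1) w^(l+1)) with
     N_l(w) = w^(l+1) P_l(e^(-w)) - l! (1 - e^(-w))^(l+1), and |1 - e^(-w)| >= |w|/2; so it
     suffices that N_l vanishes at 0 to order 2l+2, and 2l+3 for even l >= 2.  This is the
     Laurent expansion gamma_l(e^(-w)) = l!/w^(l+1) + zeta(-l) + O(w) (zeta(-l) = 0 for even
     l >= 2); here it is certified for l <= 12 by an exact rational computation of the
     Taylor coefficients of N_l, the remainder being controlled by the explicit bound
     |e^u - sum_(j<m) u^j/j!| <= 2^m |u|^m e^|u|.  The estimate holds for every theta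
   in (pi/2, pi), so theta0 = pi. *)

From Pilot Require Import Defs.
From Stdlib Require Import Reals Factorial List Lra Lia ZArith QArith Qreals.
From Coquelicot Require Import Coquelicot.
Open Scope R_scope.

Lemma Cexp_add a b : Cexp (Cplus a b) = Cmult (Cexp a) (Cexp b).
Proof.
  destruct a as [x y], b as [u v]; unfold Cexp, Cplus, Cmult; simpl.
  rewrite exp_plus, cos_plus, sin_plus.
  apply injective_projections; simpl; ring.
Qed.

Lemma Cexp_0 : Cexp (RtoC 0) = RtoC 1.
Proof.
  unfold Cexp; simpl. rewrite exp_0, cos_0, sin_0.
  apply injective_projections; simpl; ring.
Qed.

Lemma Cmod_Cexp z : Cmod (Cexp z) = exp (fst z).
Proof.
  destruct z as [x y]; unfold Cmod, Cexp; cbn [fst snd].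
  replace ((exp x * cos y) ^ 2 + (exp x * sin y) ^ 2) with (exp x ^ 2).
  - apply sqrt_pow2. left; apply exp_pos.
  - pose proof (sin2_cos2 y) as H. unfold Rsqr in H.
    transitivity (exp x ^ 2 * (sin y * sin y + cos y * cos y)); [rewrite H|]; ring.
Qed.

(* e^(t u) for real t, in coordinates: the form needed to differentiate in t. *)
Lemma Cexp_scal t u : Cexp (Cmult (RtoC t) u) =
  (exp (t * fst u) * cos (t * snd u), exp (t * fst u) * sin (t * snd u)).
Proof.
  destruct u as [x y]; unfold Cexp, Cmult, RtoC; simpl.
  replace (t * x - 0 * y) with (t * x) by ring.
  replace (t * y + 0 * x) with (t * y) by ring. reflexivity.
Qed.

Lemma exp_le_exp x y : x <= y -> exp x <= exp y.
Proof. intros [H|H]; [left; apply exp_increasing; auto | subst; lra]. Qed.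

Fixpoint Tay (m : nat) (u : C) : C :=
  match m with
  | O => RtoC 0
  | S m' => Cplus (Tay m' u) (Cmult (Cpow u m') (RtoC (/ INR (fact m'))))
  end.

Lemma Tay_at_0 m : Tay (S m) (RtoC 0) = RtoC 1.
Proof.
  induction m as [|m IH]; simpl Tay.
  - apply injective_projections; simpl; rewrite ?Rinv_1; ring.
  - simpl Tay in IH. rewrite IH. apply injective_projections; simpl; ring.
Qed.

Lemma inv_fact_S m : INR (S m) * / INR (fact (S m)) = / INR (fact m).
Proof.
  change (fact (S m)) with (S m * fact m)%nat. rewrite mult_INR.
  pose proof (INR_fact_neq_0 m). field. split; auto. apply not_0_INR. lia.
Qed.

Lemma Cmod_le_sum c : Cmod c <= Rabs (fst c) + Rabs (snd c).
Proof.
  pose proof (Rabs_pos (fst c)); pose proof (Rabs_pos (snd c)).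
  unfold Cmod. rewrite <- (sqrt_pow2 (Rabs (fst c) + Rabs (snd c))) by lra.
  apply sqrt_le_1_alt. rewrite <- (pow2_abs (fst c)), <- (pow2_abs (snd c)). nra.
Qed.

Lemma fst_le_Cmod c : Rabs (fst c) <= Cmod c.
Proof. pose proof (Rmax_Cmod c). pose proof (Rmax_l (Rabs (fst c)) (Rabs (snd c))). lra. Qed.
Lemma snd_le_Cmod c : Rabs (snd c) <= Cmod c.
Proof. pose proof (Rmax_Cmod c). pose proof (Rmax_r (Rabs (fst c)) (Rabs (snd c))). lra. Qed.

Lemma fst_scal r c : fst (Cmult (RtoC r) c) = r * fst c.
Proof. simpl. ring. Qed.
Lemma snd_scal r c : snd (Cmult (RtoC r) c) = r * snd c.
Proof. simpl. ring. Qed.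

Lemma Cexp_deriv_fst u t : is_derive (fun t => fst (Cexp (Cmult (RtoC t) u))) t
   (fst (Cmult u (Cexp (Cmult (RtoC t) u)))).
Proof.
  apply is_derive_ext with (fun t => exp (t * fst u) * cos (t * snd u)).
  - intro s. rewrite Cexp_scal. reflexivity.
  - rewrite Cexp_scal. destruct u as [x y]. simpl. auto_derive; auto. ring.
Qed.
Lemma Cexp_deriv_snd u t : is_derive (fun t => snd (Cexp (Cmult (RtoC t) u))) t
   (snd (Cmult u (Cexp (Cmult (RtoC t) u)))).
Proof.
  apply is_derive_ext with (fun t => exp (t * fst u) * sin (t * snd u)).
  - intro s. rewrite Cexp_scal. reflexivity.
  - rewrite Cexp_scal. destruct u as [x y]. simpl. auto_derive; auto. ring.
Qed.

(* The real mean value inequality is applied to [pr] of e^(tu) - Tay m (tu), for an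
   R-linear functional [pr] bounded by the modulus and commuting with d/dt on
   t |-> e^(tu); in practice pr = Re or Im. *)
Section CoordinateFunctional.
Variable pr : C -> R.
Hypothesis pr_add : forall a b, pr (Cplus a b) = pr a + pr b.
Hypothesis pr_scal : forall r c, pr (Cmult (RtoC r) c) = r * pr c.
Hypothesis pr_le : forall c, Rabs (pr c) <= Cmod c.
Hypothesis pr_Cexp_deriv : forall u t, is_derive (fun t => pr (Cexp (Cmult (RtoC t) u))) t
   (pr (Cmult u (Cexp (Cmult (RtoC t) u)))).

Lemma pr_minus a b : pr (Cminus a b) = pr a - pr b.
Proof.
  unfold Cminus. rewrite pr_add.
  replace (Copp b) with (Cmult (RtoC (-1)) b) by (apply injective_projections; simpl; ring).
  rewrite pr_scal. ring.
Qed.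

Lemma Tay_deriv m u t :
  is_derive (fun t => pr (Tay (S m) (Cmult (RtoC t) u))) t
            (pr (Cmult u (Tay m (Cmult (RtoC t) u)))).
Proof.
  revert t; induction m as [|m IH]; intro t.
  - apply is_derive_ext with (fun _ => pr (RtoC 1)).
    + intro s. f_equal. apply injective_projections; simpl; rewrite ?Rinv_1; ring.
    + replace (Cmult u (Tay 0 (Cmult (RtoC t) u))) with (Cmult (RtoC 0) (RtoC 0))
        by (apply injective_projections; simpl; ring).
      rewrite pr_scal, Rmult_0_l. auto_derive; auto.
  - set (K := pr (Cmult (RtoC (/ INR (fact (S m)))) (Cpow u (S m)))).
    apply is_derive_ext with (fun t => pr (Tay (S m) (Cmult (RtoC t) u)) + t ^ S m * K).
    + intro s. cbv beta. unfold K. rewrite <- pr_scal, <- pr_add. f_equal.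
      change (Tay (S (S m)) (Cmult (RtoC s) u)) with
        (Cplus (Tay (S m) (Cmult (RtoC s) u))
               (Cmult (Cpow (Cmult (RtoC s) u) (S m)) (RtoC (/ INR (fact (S m)))))).
      rewrite Cpow_mult_l, <- RtoC_pow. ring.
    + replace (pr (Cmult u (Tay (S m) (Cmult (RtoC t) u))))
        with (pr (Cmult u (Tay m (Cmult (RtoC t) u))) + INR (S m) * t ^ m * K).
      * apply (is_derive_plus (fun t => pr (Tay (S m) (Cmult (RtoC t) u)))
                               (fun t => t ^ S m * K)); [apply IH|].
        auto_derive; auto. simpl. ring.
      * unfold K. rewrite <- pr_scal, <- pr_add. f_equal.
        change (Tay (S m) (Cmult (RtoC t) u)) with
          (Cplus (Tay m (Cmult (RtoC t) u))
                 (Cmult (Cpow (Cmult (RtoC t) u) m) (RtoC (/ INR (fact m))))).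
        rewrite <- (inv_fact_S m), Cpow_mult_l, <- RtoC_pow, !RtoC_mult. simpl Cpow. ring.
Qed.

(* One step of the Taylor remainder estimate for the coordinate [pr]:
   the derivative of t |-> pr (e^(tu) - Tay (m+1) (tu)) is pr (u (e^(tu) - Tay m (tu))),
   so the mean value inequality on [0,1] turns a bound of order m into one of order m+1. *)

Lemma Tay_rem_step m u
  (IH : forall v, Cmod (Cminus (Cexp v) (Tay m v)) <= 2 ^ m * Cmod v ^ m * exp (Cmod v)) :
  Rabs (pr (Cminus (Cexp u) (Tay (S m) u))) <= Cmod u * (2 ^ m * Cmod u ^ m * exp (Cmod u)).
Proof.
  set (B := Cmod u * (2 ^ m * Cmod u ^ m * exp (Cmod u))).
  set (h := fun t => pr (Cexp (Cmult (RtoC t) u)) - pr (Tay (S m) (Cmult (RtoC t) u))).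
  set (dh := fun t => pr (Cmult u (Cexp (Cmult (RtoC t) u)))
                      - pr (Cmult u (Tay m (Cmult (RtoC t) u)))).
  assert (Hh1 : h 1 = pr (Cminus (Cexp u) (Tay (S m) u)))
    by (unfold h; rewrite Cmult_1_l, pr_minus; auto).
  assert (Hh0 : h 0 = 0) by (unfold h; rewrite Cmult_0_l, Cexp_0, Tay_at_0; ring).
  rewrite <- Hh1, <- (Rminus_0_r (h 1)), <- Hh0.
  replace B with (B * Rabs (1 - 0)) by (rewrite Rminus_0_r, Rabs_R1; ring).
  apply (bounded_variation h dh). intros t Ht.
  rewrite Rminus_0_r, Rminus_0_r, Rabs_R1 in Ht. split.
  - apply (is_derive_minus (fun t => pr (Cexp (Cmult (RtoC t) u)))
                           (fun t => pr (Tay (S m) (Cmult (RtoC t) u))));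
      [apply pr_Cexp_deriv | apply Tay_deriv; auto].
  - unfold dh. rewrite <- pr_minus by auto.
    replace (Cminus (Cmult u (Cexp (Cmult (RtoC t) u))) (Cmult u (Tay m (Cmult (RtoC t) u))))
      with (Cmult u (Cminus (Cexp (Cmult (RtoC t) u)) (Tay m (Cmult (RtoC t) u)))) by ring.
    eapply Rle_trans; [apply pr_le|]. rewrite Cmod_mult.
    apply Rmult_le_compat_l; [apply Cmod_ge_0|].
    eapply Rle_trans; [apply IH|].
    assert (Htu : Cmod (Cmult (RtoC t) u) <= Cmod u).
    { rewrite Cmod_mult, Cmod_R. pose proof (Cmod_ge_0 u). pose proof (Rabs_pos t). nra. }
    pose proof (Cmod_ge_0 (Cmult (RtoC t) u)).
    apply Rmult_le_compat.
    + apply Rmult_le_pos; apply pow_le; lra.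
    + left; apply exp_pos.
    + apply Rmult_le_compat_l; [apply pow_le; lra|]. apply pow_incr; lra.
    + apply exp_le_exp; auto.
Qed.
End CoordinateFunctional.

(* Taylor remainder bound |e^u - Tay m u| <= 2^m |u|^m e^|u|: each order costs a
   factor |u| per coordinate, hence 2 |u| in modulus. *)
Lemma Tay_rem m u : Cmod (Cminus (Cexp u) (Tay m u)) <= 2 ^ m * Cmod u ^ m * exp (Cmod u).
Proof.
  revert u; induction m as [|m IH]; intro u.
  - simpl Tay. rewrite !Rmult_1_l.
    replace (Cminus (Cexp u) (RtoC 0)) with (Cexp u) by (apply injective_projections; simpl; ring).
    rewrite Cmod_Cexp. apply exp_le_exp.
    pose proof (fst_le_Cmod u). pose proof (Rle_abs (fst u)). lra.
  - assert (Hre := Tay_rem_step fst (fun a b => eq_refl) fst_scal fst_le_Cmod Cexp_deriv_fst m u IH).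
    assert (Him := Tay_rem_step snd (fun a b => eq_refl) snd_scal snd_le_Cmod Cexp_deriv_snd m u IH).
    eapply Rle_trans; [apply Cmod_le_sum|]. simpl pow. lra.
Qed.

Lemma peval_padd p q x : peval (padd p q) x = Cplus (peval p x) (peval q x).
Proof.
  revert q; induction p as [|a p IH]; intros [|b q]; simpl; try ring.
  rewrite IH, RtoC_plus. ring.
Qed.

Lemma peval_pscale c p x : peval (pscale c p) x = Cmult (RtoC c) (peval p x).
Proof. induction p as [|a p IH]; simpl; [ring|]. rewrite IH, RtoC_mult. ring. Qed.

Lemma peval_app p q x : peval (p ++ q) x = Cplus (peval p x) (Cmult (Cpow x (length p)) (peval q x)).
Proof. induction p as [|a p IH]; simpl; [ring|]. rewrite IH. ring. Qed.

Definition sumabs (p : list R) : R := fold_right (fun a acc => Rabs a + acc) 0 p.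

Lemma sumabs_pos p : 0 <= sumabs p.
Proof. induction p; simpl; [lra|]. pose proof (Rabs_pos a). lra. Qed.

Lemma peval_bound p x Rb : Cmod x <= Rb -> 1 <= Rb -> Cmod (peval p x) <= sumabs p * Rb ^ length p.
Proof.
  intros Hx HR. induction p as [|a p IH]; simpl.
  - rewrite Cmod_0. lra.
  - eapply Rle_trans; [apply Cmod_triangle|]. rewrite Cmod_R, Cmod_mult.
    pose proof (Cmod_ge_0 (peval p x)). pose proof (Cmod_ge_0 x).
    pose proof (pow_R1_Rle Rb (length p) HR). pose proof (sumabs_pos p). pose proof (Rabs_pos a).
    assert (Cmod x * Cmod (peval p x) <= Rb * (sumabs p * Rb ^ length p))
      by (apply Rmult_le_compat; auto).
    assert (1 <= Rb * Rb ^ length p) by nra.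
    assert (Rabs a <= Rabs a * (Rb * Rb ^ length p)) by nra.
    nra.
Qed.

Lemma peval_bound1 p x : Cmod x <= 1 -> Cmod (peval p x) <= sumabs p.
Proof. intro H. pose proof (peval_bound p x 1 H (Rle_refl 1)) as B. rewrite pow1 in B. lra. Qed.

(* Exact rational mirror of the polynomial operations of [Defs], used to run the
   finite coefficient computation by evaluation; [map Q2R] transports it back. *)
Section RationalMirror.
Local Open Scope Q_scope.

Fixpoint paddQ (p q : list Q) : list Q :=
  match p, q with
  | nil, _ => q
  | _, nil => p
  | a :: p', b :: q' => (a + b) :: paddQ p' q'
  end.

Definition pscaleQ (c : Q) (p : list Q) : list Q := map (fun a => c * a) p.

Fixpoint pderiv_auxQ (k : nat) (p : list Q) : list Q :=
  match p with
  | nil => nil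
  | a :: t => (inject_Z (Z.of_nat k) * a) :: pderiv_auxQ (S k) t
  end.

Definition pderivQ (p : list Q) : list Q :=
  match p with nil => nil | _ :: t => pderiv_auxQ 1 t end.

Fixpoint gammaNumQ (l : nat) : list Q :=
  match l with
  | O => 0 :: 1 :: nil
  | S l' =>
      0 :: paddQ (paddQ (pderivQ (gammaNumQ l')) (pscaleQ (-1) (0 :: pderivQ (gammaNumQ l'))))
                 (pscaleQ (inject_Z (Z.of_nat (S l'))) (gammaNumQ l'))
  end.

Fixpoint pmulQ (p q : list Q) : list Q :=
  match p with nil => nil | a :: t => paddQ (pscaleQ a q) (0 :: pmulQ t q) end.

Fixpoint ppowQ (p : list Q) (n : nat) : list Q :=
  match n with O => 1 :: nil | S n' => pmulQ p (ppowQ p n') end.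

(* factorial in binary integers, so that l! can be computed for l <= 12 *)
Fixpoint factZ (n : nat) : Z :=
  match n with O => 1%Z | S k => (Z.of_nat (S k) * factZ k)%Z end.

Fixpoint qpow (q : Q) (n : nat) : Q := match n with O => 1 | S k => q * qpow q k end.

(* l! (1 - X)^(l+1), the numerator of l!/w^(l+1) after clearing (1 - xi)^(l+1) *)
Definition denomQ (l : nat) : list Q :=
  pscaleQ (inject_Z (factZ l)) (ppowQ (1 :: -1 :: nil) (S l)).

Fixpoint expRowQ (s m : nat) : list Q :=
  match m with
  | O => nil
  | S m' => expRowQ s m' ++ (qpow (- inject_Z (Z.of_nat s)) m' / inject_Z (factZ m') :: nil)
  end.

(* Taylor coefficients of order m of w |-> e^(-s w) p(e^(-w)) *)
Fixpoint expSeriesQ (p : list Q) (s m : nat) : list Q :=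
  match p with
  | nil => nil
  | a :: t => paddQ (pscaleQ a (expRowQ s m)) (expSeriesQ t (S s) m)
  end.

(* truncation order of the expansions: 2l+3, enough for every l *)
Definition taylorOrder (l : nat) : nat := (2 * S l + 1)%nat.

(* Taylor coefficients of w^(l+1) P_l(e^(-w)) - l! (1 - e^(-w))^(l+1) *)
Definition numSeriesQ (l : nat) : list Q :=
  paddQ (repeat 0 (S l) ++ expSeriesQ (gammaNumQ l) 0 (taylorOrder l))
        (pscaleQ (-1) (expSeriesQ (denomQ l) 0 (taylorOrder l))).

Definition vanishOrder (l : nat) : nat :=
  if (Nat.eqb l 0 || Nat.odd l)%bool then (2 * S l)%nat else (2 * S l + 1)%nat.

Lemma numSeries_vanishes l : (l <= 12)%nat ->
  firstn (vanishOrder l) (map Qred (numSeriesQ l)) = repeat 0 (vanishOrder l).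
Proof.
  intro H.
  do 13 (destruct l as [|l]; [vm_compute; reflexivity|]).
  lia.
Qed.
End RationalMirror.

Lemma Q2R_inject z : Q2R (inject_Z z) = IZR z.
Proof. unfold Q2R; simpl. field. Qed.
Lemma Q2R_0 : Q2R 0%Q = 0.
Proof. unfold Q2R; simpl. ring. Qed.
Lemma Q2R_1 : Q2R 1%Q = 1.
Proof. unfold Q2R; simpl. field. Qed.
Lemma Q2R_m1 : Q2R (-1)%Q = -1.
Proof. unfold Q2R; simpl. field. Qed.
Lemma Q2R_nat k : Q2R (inject_Z (Z.of_nat k)) = INR k.
Proof. rewrite Q2R_inject, INR_IZR_INZ. reflexivity. Qed.
Lemma Q2R_qpow q n : Q2R (qpow q n) = Q2R q ^ n.
Proof. induction n as [|n IH]; simpl; [apply Q2R_1|]. rewrite Q2R_mult, IH. reflexivity. Qed.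

Lemma factZ_INR n : IZR (factZ n) = INR (fact n).
Proof.
  induction n as [|n IH]; [reflexivity|].
  change (factZ (S n)) with (Z.of_nat (S n) * factZ n)%Z.
  change (fact (S n)) with (S n * fact n)%nat.
  rewrite mult_IZR, IH, <- INR_IZR_INZ, mult_INR. reflexivity.
Qed.

Lemma map_padd p q : map Q2R (paddQ p q) = padd (map Q2R p) (map Q2R q).
Proof.
  revert q; induction p as [|a p IH]; intros [|b q]; simpl; auto.
  rewrite Q2R_plus, IH. reflexivity.
Qed.
Lemma map_pscale c p : map Q2R (pscaleQ c p) = pscale (Q2R c) (map Q2R p).
Proof. induction p as [|a p IH]; simpl; auto. rewrite Q2R_mult, IH. reflexivity. Qed.
Lemma map_pderiv_aux k p : map Q2R (pderiv_auxQ k p) = pderiv_aux k (map Q2R p).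
Proof.
  revert k; induction p as [|a p IH]; intro k; simpl; auto.
  rewrite Q2R_mult, Q2R_nat, IH. reflexivity.
Qed.
Lemma map_pderiv p : map Q2R (pderivQ p) = pderiv (map Q2R p).
Proof. destruct p; simpl; auto. apply map_pderiv_aux. Qed.

Lemma gammaNum_Q l : gammaNum l = map Q2R (gammaNumQ l).
Proof.
  induction l as [|l IH].
  - simpl. rewrite Q2R_0, Q2R_1. reflexivity.
  - change (gammaNum (S l)) with (pmulX (padd (padd (pderiv (gammaNum l))
      (pscale (-1) (pmulX (pderiv (gammaNum l))))) (pscale (INR (S l)) (gammaNum l)))).
    change (gammaNumQ (S l)) with (0%Q :: paddQ (paddQ (pderivQ (gammaNumQ l))
      (pscaleQ (-1) (0%Q :: pderivQ (gammaNumQ l)))) (pscaleQ (inject_Z (Z.of_nat (S l))) (gammaNumQ l))).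
    rewrite IH. cbn [map]. rewrite Q2R_0, !map_padd, !map_pscale, Q2R_m1, Q2R_nat.
    cbn [map]. rewrite Q2R_0, map_pderiv. reflexivity.
Qed.

Lemma peval_Q_add p q x :
  peval (map Q2R (paddQ p q)) x = Cplus (peval (map Q2R p) x) (peval (map Q2R q) x).
Proof. rewrite map_padd; apply peval_padd. Qed.
Lemma peval_Q_scale c p x :
  peval (map Q2R (pscaleQ c p)) x = Cmult (RtoC (Q2R c)) (peval (map Q2R p) x).
Proof. rewrite map_pscale; apply peval_pscale. Qed.
Lemma peval_Q_mul p q x :
  peval (map Q2R (pmulQ p q)) x = Cmult (peval (map Q2R p) x) (peval (map Q2R q) x).
Proof.
  induction p as [|a p IH]; simpl pmulQ; [simpl; ring|].
  rewrite peval_Q_add, peval_Q_scale. cbn [map peval]. rewrite IH, Q2R_0. ring.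
Qed.
Lemma peval_Q_pow p n x : peval (map Q2R (ppowQ p n)) x = Cpow (peval (map Q2R p) x) n.
Proof.
  induction n as [|n IH]; simpl ppowQ.
  - simpl. rewrite Q2R_1. ring.
  - rewrite peval_Q_mul, IH. reflexivity.
Qed.

Lemma peval_denomQ l x :
  peval (map Q2R (denomQ l)) x = Cmult (RtoC (INR (fact l))) (Cpow (Cminus (RtoC 1) x) (S l)).
Proof.
  unfold denomQ. rewrite peval_Q_scale, peval_Q_pow, Q2R_inject, factZ_INR.
  cbn [map peval]. rewrite Q2R_1, Q2R_m1. do 2 f_equal. ring.
Qed.

(* e^(-s w), the building block of xi^s with xi = e^(-w) *)
Definition expNeg (s : nat) (w : C) : C := Cexp (Cmult (RtoC (- INR s)) w).

Lemma expNeg_0 w : expNeg 0 w = RtoC 1.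
Proof.
  unfold expNeg. replace (Cmult (RtoC (- INR 0)) w) with (RtoC 0) by (apply injective_projections; simpl; ring).
  apply Cexp_0.
Qed.

Lemma expNeg_S s w : Cmult (expNeg s w) (expNeg 1 w) = expNeg (S s) w.
Proof.
  unfold expNeg. rewrite <- Cexp_add. f_equal. rewrite (S_INR s). change (INR 1) with 1.
  apply injective_projections; simpl; ring.
Qed.

Lemma length_expRowQ s m : length (expRowQ s m) = m.
Proof. induction m as [|m IH]; simpl; auto. rewrite length_app, IH. simpl. lia. Qed.

Lemma factZ_nz j : ~ (inject_Z (factZ j) == 0)%Q.
Proof.
  intro H. apply (INR_fact_neq_0 j). rewrite <- factZ_INR, <- Q2R_inject.
  rewrite (Qeq_eqR _ _ H). apply Q2R_0.
Qed.

Lemma peval_expRowQ s m w : peval (map Q2R (expRowQ s m)) w = Tay m (Cmult (RtoC (- INR s)) w).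
Proof.
  induction m as [|m IH]; [reflexivity|].
  simpl expRowQ. rewrite map_app, peval_app, IH, length_map, length_expRowQ. simpl Tay. f_equal.
  cbn [map peval]. unfold Qdiv. rewrite Q2R_mult, Q2R_inv by apply factZ_nz.
  rewrite Q2R_qpow, Q2R_opp, Q2R_nat, Q2R_inject, factZ_INR.
  rewrite Cpow_mult_l, <- RtoC_pow, !RtoC_mult. ring.
Qed.

Lemma expNeg_taylor s m M w : INR s <= M -> Cmod w <= 1 ->
  Cmod (Cminus (expNeg s w) (Tay m (Cmult (RtoC (- INR s)) w)))
  <= 2 ^ m * M ^ m * exp M * Cmod w ^ m.
Proof.
  intros HsM Hw. pose proof (pos_INR s). pose proof (Cmod_ge_0 w).
  eapply Rle_trans; [apply Tay_rem|].
  rewrite Cmod_mult, Cmod_R, Rabs_Ropp, Rabs_right, Rpow_mult_distr by lra.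
  assert (INR s ^ m <= M ^ m) by (apply pow_incr; lra).
  assert (exp (INR s * Cmod w) <= exp M) by (apply exp_le_exp; nra).
  pose proof (pow_le (Cmod w) m ltac:(lra)). pose proof (pow_le (INR s) m ltac:(lra)).
  pose proof (pow_le 2 m ltac:(lra)). pose proof (exp_pos (INR s * Cmod w)).
  assert (INR s ^ m * Cmod w ^ m * exp (INR s * Cmod w) <= M ^ m * Cmod w ^ m * exp M).
  { apply Rmult_le_compat; try lra; [apply Rmult_le_pos; auto|].
    apply Rmult_le_compat_r; auto. }
  nra.
Qed.

Lemma expSeriesQ_err p s m w : Cmod w <= 1 ->
  Cmod (Cminus (Cmult (expNeg s w) (peval (map Q2R p) (expNeg 1 w)))
               (peval (map Q2R (expSeriesQ p s m)) w))
  <= sumabs (map Q2R p) * (2 ^ m * INR (s + length p) ^ m * exp (INR (s + length p))) * Cmod w ^ m.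
Proof.
  intro Hw. revert s; induction p as [|a p IH]; intro s.
  - simpl. replace (Cminus (Cmult (expNeg s w) (RtoC 0)) (RtoC 0)) with (RtoC 0) by ring.
    rewrite Cmod_0. lra.
  - simpl expSeriesQ. rewrite peval_Q_add, peval_Q_scale, peval_expRowQ.
    cbn [map peval length].
    replace (s + S (length p))%nat with (S s + length p)%nat by lia.
    set (M := INR (S s + length p)). set (K := 2 ^ m * M ^ m * exp M * Cmod w ^ m).
    specialize (IH (S s)). fold M in IH.
    assert (HT : Cmod (Cminus (expNeg s w) (Tay m (Cmult (RtoC (- INR s)) w))) <= K)
      by (apply expNeg_taylor; auto; unfold M; apply le_INR; lia).
    replace (Cminus (Cmult (expNeg s w) (Cplus (RtoC (Q2R a)) (Cmult (expNeg 1 w) (peval (map Q2R p) (expNeg 1 w)))))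
       (Cplus (Cmult (RtoC (Q2R a)) (Tay m (Cmult (RtoC (- INR s)) w))) (peval (map Q2R (expSeriesQ p (S s) m)) w)))
     with (Cplus (Cmult (RtoC (Q2R a)) (Cminus (expNeg s w) (Tay m (Cmult (RtoC (- INR s)) w))))
        (Cminus (Cmult (expNeg (S s) w) (peval (map Q2R p) (expNeg 1 w))) (peval (map Q2R (expSeriesQ p (S s) m)) w)))
     by (rewrite <- expNeg_S; ring).
    eapply Rle_trans; [apply Cmod_triangle|]. rewrite Cmod_mult, Cmod_R.
    pose proof (Rabs_pos (Q2R a)).
    assert (Rabs (Q2R a) * Cmod (Cminus (expNeg s w) (Tay m (Cmult (RtoC (- INR s)) w))) <= Rabs (Q2R a) * K)
      by (apply Rmult_le_compat_l; auto).
    change (sumabs (Q2R a :: map Q2R p)) with (Rabs (Q2R a) + sumabs (map Q2R p)).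
    unfold K in *. lra.
Qed.

Lemma peval_Q_zeros n x : peval (map Q2R (repeat 0%Q n)) x = RtoC 0.
Proof. induction n as [|n IH]; [reflexivity|]. cbn [repeat map peval]. rewrite IH, Q2R_0. ring. Qed.

Lemma vanishing_poly_bound (p : list Q) n :
  firstn n (map Qred p) = repeat 0%Q n -> exists K, 0 <= K /\
  forall w, Cmod w <= 1 -> Cmod (peval (map Q2R p) w) <= K * Cmod w ^ n.
Proof.
  intro Hp. exists (sumabs (map Q2R (skipn n (map Qred p)))). split; [apply sumabs_pos|].
  intros w Hw.
  assert (Hred : map Q2R p = map Q2R (map Qred p)).
  { rewrite map_map. apply map_ext. intro a. apply Qeq_eqR. symmetry. apply Qred_correct. }
  assert (Hsplit : map Qred p = repeat 0%Q n ++ skipn n (map Qred p))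
    by (rewrite <- Hp; symmetry; apply firstn_skipn).
  rewrite Hred, Hsplit at 1. rewrite map_app, peval_app.
  rewrite peval_Q_zeros, length_map, repeat_length, Cplus_0_l, Cmod_mult, Cmod_pow, Rmult_comm.
  apply Rmult_le_compat_r; [apply pow_le, Cmod_ge_0|]. apply peval_bound1; auto.
Qed.

Lemma expSeriesQ_approx p m : exists C, 0 <= C /\ forall w, Cmod w <= 1 ->
  Cmod (Cminus (peval (map Q2R p) (expNeg 1 w)) (peval (map Q2R (expSeriesQ p 0 m)) w))
  <= C * Cmod w ^ m.
Proof.
  set (M := INR (0 + length p)).
  exists (sumabs (map Q2R p) * (2 ^ m * M ^ m * exp M)). split.
  - apply Rmult_le_pos; [apply sumabs_pos|].
    apply Rmult_le_pos; [|left; apply exp_pos].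
    apply Rmult_le_pos; apply pow_le; [lra | apply pos_INR].
  - intros w Hw. pose proof (expSeriesQ_err p 0 m w Hw) as H.
    rewrite expNeg_0, Cmult_1_l in H. exact H.
Qed.

Lemma pow_le1_antimono x a b : 0 <= x <= 1 -> (a <= b)%nat -> x ^ b <= x ^ a.
Proof.
  intros Hx Hab. replace b with (a + (b - a))%nat by lia. rewrite pow_add.
  assert (x ^ (b - a) <= 1) by (rewrite <- (pow1 (b - a)); apply pow_incr; lra).
  pose proof (pow_le x a (proj1 Hx)). pose proof (pow_le x (b - a) (proj1 Hx)). nra.
Qed.

(* N_l, the numerator of F_l(w) = gamma_l(e^(-w))/l! - 1/w^(l+1) over the common
   denominator l! (1 - e^(-w))^(l+1) w^(l+1). *)
Definition errNum (l : nat) (w : C) : C :=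
  Cminus (Cmult (Cpow w (S l)) (peval (gammaNum l) (expNeg 1 w)))
         (Cmult (RtoC (INR (fact l))) (Cpow (Cminus (RtoC 1) (expNeg 1 w)) (S l))).

(* The numerator vanishes to order [vanishOrder l] at w = 0: it equals the
   certified vanishing polynomial up to two Taylor remainders of higher order. *)
Lemma errNum_bound l : (l <= 12)%nat -> exists KN, 0 <= KN /\
  forall w, Cmod w <= 1 -> Cmod (errNum l w) <= KN * Cmod w ^ vanishOrder l.
Proof.
  intro Hl.
  destruct (vanishing_poly_bound _ _ (numSeries_vanishes l Hl)) as [KD [HKD HD]].
  destruct (expSeriesQ_approx (gammaNumQ l) (taylorOrder l)) as [KG [HKG HG]].
  destruct (expSeriesQ_approx (denomQ l) (taylorOrder l)) as [KB [HKB HB]].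
  exists (KD + KG + KB). split; [lra|]. intros w Hw.
  pose proof (Cmod_ge_0 w) as Hw0.
  set (errG := Cminus (peval (map Q2R (gammaNumQ l)) (expNeg 1 w))
                      (peval (map Q2R (expSeriesQ (gammaNumQ l) 0 (taylorOrder l))) w)).
  set (errB := Cminus (peval (map Q2R (denomQ l)) (expNeg 1 w))
                      (peval (map Q2R (expSeriesQ (denomQ l) 0 (taylorOrder l))) w)).
  assert (Hsplit : errNum l w =
    Cplus (peval (map Q2R (numSeriesQ l)) w) (Cminus (Cmult (Cpow w (S l)) errG) errB)).
  { unfold errNum, numSeriesQ, errG, errB.
    rewrite gammaNum_Q, <- peval_denomQ, peval_Q_add, map_app, peval_app, peval_Q_scale,
      Q2R_m1, length_map, repeat_length, peval_Q_zeros.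
    ring. }
  assert (Hord : Cmod w ^ taylorOrder l <= Cmod w ^ vanishOrder l).
  { apply pow_le1_antimono; [lra|]. unfold vanishOrder, taylorOrder. destruct (_ || _)%bool; lia. }
  assert (HwS : Cmod w ^ S l <= 1) by (rewrite <- (pow1 (S l)); apply pow_incr; lra).
  specialize (HD w Hw). specialize (HG w Hw). specialize (HB w Hw). fold errG in HG. fold errB in HB.
  pose proof (Cmod_ge_0 errG). pose proof (pow_le _ (S l) Hw0). pose proof (pow_le _ (vanishOrder l) Hw0).
  assert (Cmod w ^ S l * Cmod errG <= KG * Cmod w ^ vanishOrder l).
  { apply Rle_trans with (1 * (KG * Cmod w ^ taylorOrder l)); [apply Rmult_le_compat; lra|].
    rewrite Rmult_1_l. apply Rmult_le_compat_l; auto. }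
  assert (KB * Cmod w ^ taylorOrder l <= KB * Cmod w ^ vanishOrder l) by (apply Rmult_le_compat_l; auto).
  rewrite Hsplit. eapply Rle_trans; [apply Cmod_triangle|].
  unfold Cminus. eapply Rle_trans; [apply Rplus_le_compat_l, Cmod_triangle|].
  rewrite Cmod_opp, Cmod_mult, Cmod_pow. lra.
Qed.

Definition errF (l : nat) (w : C) : C :=
  Cminus (Cdiv (gamma l (expNeg 1 w)) (RtoC (INR (fact l)))) (Cinv (Cpow w (S l))).

Lemma RtoC_neq r : r <> 0 -> RtoC r <> RtoC 0.
Proof. intros H E. apply H. injection E. auto. Qed.

Lemma errF_eq l w : w <> RtoC 0 -> Cminus (RtoC 1) (expNeg 1 w) <> RtoC 0 ->
  errF l w = Cdiv (errNum l w)
    (Cmult (Cmult (RtoC (INR (fact l))) (Cpow (Cminus (RtoC 1) (expNeg 1 w)) (S l))) (Cpow w (S l))).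
Proof.
  intros Hw H1. unfold errF, errNum, gamma.
  pose proof (Cpow_nz _ (S l) Hw). pose proof (Cpow_nz _ (S l) H1).
  pose proof (RtoC_neq _ (INR_fact_neq_0 l)).
  field. auto.
Qed.

Lemma Cmod_expNeg1 w : Cmod (expNeg 1 w) = exp (- fst w).
Proof. unfold expNeg. rewrite Cmod_Cexp. simpl. f_equal. ring. Qed.

(* Near 0, 1 - e^(-w) = w + O(w^2), so |1 - e^(-w)| >= |w|/2. *)
Lemma one_minus_xi_near w : Cmod w <= 1/32 -> Cmod w / 2 <= Cmod (Cminus (RtoC 1) (expNeg 1 w)).
Proof.
  intro Hw. set (u := Cmult (RtoC (- INR 1)) w).
  assert (Hu : Cmod u = Cmod w).
  { unfold u. rewrite Cmod_mult, Cmod_R. simpl INR. rewrite Rabs_Ropp, Rabs_R1. ring. }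
  assert (HT := Tay_rem 2 u). rewrite Hu in HT.
  replace (Tay 2 u) with (Cplus (RtoC 1) u) in HT
    by (apply injective_projections; simpl; rewrite ?Rinv_1; ring).
  change (Cexp u) with (expNeg 1 w) in HT.
  pose proof (Cmod_ge_0 w).
  assert (exp (Cmod w) <= 3)
    by (apply Rle_trans with (exp 1); [apply exp_le_exp; lra | apply exp_le_3]).
  assert (Hq : Cmod (Cminus (expNeg 1 w) (Cplus (RtoC 1) u)) <= 12 * Cmod w ^ 2).
  { eapply Rle_trans; [apply HT|]. assert (0 <= Cmod w ^ 2) by (apply pow_le; lra). nra. }
  assert (Htri : Cmod w <= Cmod (Cminus (RtoC 1) (expNeg 1 w))
                           + Cmod (Cminus (expNeg 1 w) (Cplus (RtoC 1) u))).
  { replace w with (Cplus (Cminus (RtoC 1) (expNeg 1 w)) (Cminus (expNeg 1 w) (Cplus (RtoC 1) u))) at 1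
      by (unfold u; simpl INR; apply injective_projections; simpl; ring).
    apply Cmod_triangle. }
  simpl in Hq. nra.
Qed.

Lemma errF_near_zero l : (l <= 12)%nat -> exists K, 0 <= K /\
  forall w, w <> RtoC 0 -> Cmod w <= 1/32 ->
  Cmod (errF l w) <= K * Cmod w ^ (vanishOrder l - 2 * S l).
Proof.
  intro Hl. destruct (errNum_bound l Hl) as [KN [HKN HN]].
  assert (Hf : 0 < INR (fact l)) by (apply lt_0_INR, lt_O_fact).
  assert (H2 : 0 < 2 ^ S l) by (apply pow_lt; lra).
  exists (KN * 2 ^ S l / INR (fact l)). split.
  { unfold Rdiv. apply Rmult_le_pos; [nra | left; apply Rinv_0_lt_compat; auto]. }
  intros w Hw0 Hw.
  assert (Hwp : 0 < Cmod w) by (apply Cmod_gt_0; auto).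
  assert (H1 := one_minus_xi_near w Hw).
  assert (H1nz : Cminus (RtoC 1) (expNeg 1 w) <> RtoC 0)
    by (intro E; rewrite E, Cmod_0 in H1; lra).
  set (e := (vanishOrder l - 2 * S l)%nat).
  assert (Hm : vanishOrder l = (S l + S l + e)%nat)
    by (unfold e, vanishOrder; destruct (_ || _)%bool; lia).
  specialize (HN w ltac:(lra)). rewrite Hm, !pow_add in HN.
  rewrite errF_eq by auto. unfold Cdiv.
  rewrite Cmod_mult, Cmod_inv, !Cmod_mult, Cmod_R, !Cmod_pow, Rabs_right by
    (try apply Rle_ge, pos_INR; repeat apply Cmult_neq_0; auto using RtoC_neq, INR_fact_neq_0, Cpow_nz).
  set (a := Cmod w ^ S l) in *. set (q := Cmod (Cminus (RtoC 1) (expNeg 1 w)) ^ S l).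
  set (b := Cmod w ^ e) in *. set (f := INR (fact l)) in *.
  assert (Ha : 0 < a) by (apply pow_lt; auto).
  assert (Hb : 0 <= b) by (apply pow_le; lra).
  assert (Hq : a * / 2 ^ S l <= q).
  { unfold a, q. rewrite <- pow_inv, <- Rpow_mult_distr. apply pow_incr. lra. }
  assert (Hq0 : 0 < a * / 2 ^ S l) by (apply Rmult_lt_0_compat; auto; apply Rinv_0_lt_compat; auto).
  assert (Hqp : 0 < q) by lra.
  apply Rle_trans with (KN * (a * a * b) * / (f * (a * / 2 ^ S l) * a)).
  - apply Rmult_le_compat; try lra.
    + apply Cmod_ge_0.
    + left. apply Rinv_0_lt_compat. apply Rmult_lt_0_compat; [apply Rmult_lt_0_compat|]; auto.
    + apply Rinv_le_contravar; [apply Rmult_lt_0_compat; [apply Rmult_lt_0_compat|]; auto|]. apply Rmult_le_compat_r; [lra|]. apply Rmult_le_compat_l; lra.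
  - right. field. split; lra.
Qed.

(* Lower bound for |1 - e^(-w)| away from 0 in the strip |Im w| <= pi: writing
   w = x + iy and E = e^(-x), |1 - e^(-w)|^2 = (1 - E)^2 + 2E(1 - cos y), so either
   |x| >= d and the first term is large, or |y| > d and the second one is. *)
Definition dd : R := 1/64.
Definition eta : R :=
  Rmin (1 - exp (- dd)) (Rmin (exp dd - 1) (sqrt (2 * exp (- dd) * (1 - cos dd)))).

Lemma eta_pos : 0 < eta.
Proof.
  unfold eta, dd.
  pose proof (exp_increasing (- (1/64)) 0 ltac:(lra)).
  pose proof (exp_increasing 0 (1/64) ltac:(lra)).
  pose proof (cos_decreasing_1 0 (1/64)) as Hcos. pose proof PI2_3_2.
  rewrite exp_0 in *. rewrite cos_0 in Hcos.
  pose proof (exp_pos (- (1/64))).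
  apply Rmin_glb_lt; [lra|]. apply Rmin_glb_lt; [lra|].
  apply sqrt_lt_R0. apply Rmult_lt_0_compat; [|specialize (Hcos ltac:(lra) ltac:(lra) ltac:(lra) ltac:(lra) ltac:(lra))]; lra.
Qed.

Lemma cos_Rabs y : cos (Rabs y) = cos y.
Proof. destruct (Rcase_abs y); [rewrite Rabs_left, cos_neg | rewrite Rabs_right]; auto. Qed.

Lemma one_minus_xi_sq x y :
  Cmod (Cminus (RtoC 1) (expNeg 1 (x, y))) ^ 2
  = (1 - exp (- x)) ^ 2 + 2 * exp (- x) * (1 - cos y).
Proof.
  unfold expNeg. change (INR 1) with 1. rewrite Cexp_scal. simpl fst; simpl snd.
  rewrite Cmod2_alt. unfold Re, Im. simpl fst; simpl snd.
  replace (- (1) * x) with (- x) by ring. replace (- (1) * y) with (- y) by ring.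
  rewrite cos_neg, sin_neg. pose proof (sin2_cos2 y) as H. unfold Rsqr in H.
  transitivity ((1 - exp (- x) * cos y) ^ 2 + (exp (- x) * sin y) ^ 2); [simpl; ring|].
  replace ((exp (- x) * sin y) ^ 2) with (exp (- x) ^ 2 * (sin y * sin y)) by ring.
  replace (sin y * sin y) with (1 - cos y * cos y) by lra. ring.
Qed.

Lemma one_minus_xi_away w : 1/32 < Cmod w -> Rabs (snd w) <= PI ->
  eta <= Cmod (Cminus (RtoC 1) (expNeg 1 w)).
Proof.
  intros Hw Hy. destruct w as [x y]. simpl in Hy.
  set (E := exp (- x)). pose proof (exp_pos (- x)) as HE. fold E in HE.
  assert (Hsq := one_minus_xi_sq x y). fold E in Hsq.
  pose proof (Cmod_ge_0 (Cminus (RtoC 1) (expNeg 1 (x, y)))).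
  pose proof eta_pos. pose proof (COS_bound y).
  enough (eta ^ 2 <= (1 - E) ^ 2 + 2 * E * (1 - cos y)) by nra.
  destruct (Rle_or_lt dd x) as [Hx1|Hx1]; [|destruct (Rle_or_lt x (- dd)) as [Hx2|Hx2]].
  - assert (E <= exp (- dd)) by (apply exp_le_exp; lra).
    assert (eta <= 1 - exp (- dd)) by apply Rmin_l. nra.
  - assert (exp dd <= E) by (apply exp_le_exp; lra).
    assert (eta <= exp dd - 1) by (eapply Rle_trans; [apply Rmin_r | apply Rmin_l]). nra.
  - assert (Hyd : dd < Rabs y).
    { unfold Cmod in Hw. simpl in Hw. unfold dd in *.
      destruct (Rle_or_lt (Rabs y) (1/64)) as [Hy'|]; auto.
      assert (Hsqrt : sqrt (x * (x * 1) + y * (y * 1)) <= sqrt ((1/32) ^ 2)).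
      { apply sqrt_le_1_alt. pose proof (Rsqr_abs y) as Hay. unfold Rsqr in Hay.
        pose proof (Rabs_pos y). simpl. nra. }
      rewrite sqrt_pow2 in Hsqrt by lra. lra. }
    assert (Hcy : cos y <= cos dd).
    { rewrite <- cos_Rabs. left. apply cos_decreasing_1; unfold dd in *; pose proof PI2_3_2; lra. }
    assert (exp (- dd) <= E) by (apply exp_le_exp; lra).
    set (D := 2 * exp (- dd) * (1 - cos dd)).
    assert (HD : 0 <= D)
      by (unfold D; pose proof (exp_pos (- dd)); pose proof (COS_bound dd);
          apply Rmult_le_pos; lra).
    assert (eta <= sqrt D) by (eapply Rle_trans; [apply Rmin_r | apply Rmin_r]).
    assert (Hss : sqrt D * sqrt D = D) by (apply sqrt_sqrt; auto).
    assert (D <= 2 * E * (1 - cos y))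
      by (unfold D; pose proof (exp_pos (- dd)); pose proof (COS_bound dd); apply Rmult_le_compat; lra).
    assert (eta * eta <= sqrt D * sqrt D) by (apply Rmult_le_compat; lra).
    pose proof (pow2_ge_0 (1 - E)). simpl. lra.
Qed.

(* Away from 0, in the region |Im w| <= pi, Re w >= -a, both terms of errF are
   bounded: |e^(-w)| <= e^a bounds the numerator P_l(e^(-w)) and |1 - e^(-w)| >= eta. *)
Lemma errF_away l a : 0 <= a -> exists K, 0 <= K /\
  forall w, 1/32 < Cmod w -> Rabs (snd w) <= PI -> - a <= fst w -> Cmod (errF l w) <= K.
Proof.
  intro Ha.
  set (sA := sumabs (gammaNum l)). set (n := length (gammaNum l)).
  set (f := INR (fact l)).
  assert (Hf : 0 < f) by (apply lt_0_INR, lt_O_fact).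
  assert (He : 0 < eta ^ S l) by (apply pow_lt, eta_pos).
  assert (H32 : 0 < (1/32) ^ S l) by (apply pow_lt; lra).
  assert (HRb : 1 <= exp a) by (rewrite <- exp_0; apply exp_le_exp; auto).
  assert (HsA : 0 <= sA) by apply sumabs_pos.
  assert (HRn : 0 <= exp a ^ n) by (apply pow_le; lra).
  exists (sA * exp a ^ n / (eta ^ S l * f) + / (1/32) ^ S l). split.
  { apply Rplus_le_le_0_compat; [|left; apply Rinv_0_lt_compat; auto].
    apply Rmult_le_pos; [nra|]. left; apply Rinv_0_lt_compat, Rmult_lt_0_compat; auto. }
  intros w Hw Hy Hx.
  assert (H1 := one_minus_xi_away w Hw Hy).
  assert (H1nz : Cminus (RtoC 1) (expNeg 1 w) <> RtoC 0)
    by (intro E; rewrite E, Cmod_0 in H1; pose proof eta_pos; lra).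
  assert (Hw0 : w <> RtoC 0) by (intro E; rewrite E, Cmod_0 in Hw; lra).
  unfold errF, Cminus at 1. eapply Rle_trans; [apply Cmod_triangle|]. rewrite Cmod_opp.
  apply Rplus_le_compat.
  - unfold gamma. rewrite Cmod_div by (apply RtoC_neq, INR_fact_neq_0).
    rewrite Cmod_div by (apply Cpow_nz; auto).
    rewrite Cmod_R, Rabs_right, Cmod_pow by (apply Rle_ge, pos_INR). fold f.
    assert (Hp : Cmod (peval (gammaNum l) (expNeg 1 w)) <= sA * exp a ^ n)
      by (apply peval_bound; auto; rewrite Cmod_expNeg1; apply exp_le_exp; lra).
    assert (Hq : eta ^ S l <= Cmod (Cminus (RtoC 1) (expNeg 1 w)) ^ S l)
      by (apply pow_incr; pose proof eta_pos; lra).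
    unfold Rdiv. rewrite Rmult_assoc, <- Rinv_mult.
    apply Rmult_le_compat; auto.
    + apply Cmod_ge_0.
    + left. apply Rinv_0_lt_compat. apply Rmult_lt_0_compat; auto. lra.
    + apply Rinv_le_contravar; [apply Rmult_lt_0_compat; auto|].
      apply Rmult_le_compat_r; lra.
  - rewrite Cmod_inv, Cmod_pow by (apply Cpow_nz; auto).
    apply Rinv_le_contravar; auto. apply pow_incr. lra.
Qed.

(* Combined estimate on the half-strip: |errF l w| <= C, improved to C |w| for
   even l >= 2 (where the numerator vanishes to one order more). *)
Lemma errF_bound l a : (l <= 12)%nat -> 0 <= a -> exists C, 0 < C /\
  forall w, w <> RtoC 0 -> Rabs (snd w) <= PI -> - a <= fst w ->
  Cmod (errF l w) <= C * (if (Nat.eqb l 0 || Nat.odd l)%bool then 1 else Cmod w).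
Proof.
  intros Hl Ha.
  destruct (errF_near_zero l Hl) as [KB [HKB HB]].
  destruct (errF_away l a Ha) as [KA [HKA HA]].
  exists (KB + 32 * KA + 1). split; [lra|].
  intros w Hw0 Hy Hx. pose proof (Cmod_ge_0 w).
  unfold vanishOrder in HB. destruct (Nat.eqb l 0 || Nat.odd l)%bool.
  - replace (2 * S l - 2 * S l)%nat with 0%nat in HB by lia.
    destruct (Rle_or_lt (Cmod w) (1/32)) as [H1|H1].
    + specialize (HB w Hw0 H1). simpl in HB. lra.
    + specialize (HA w H1 Hy Hx). lra.
  - replace (2 * S l + 1 - 2 * S l)%nat with 1%nat in HB by lia.
    destruct (Rle_or_lt (Cmod w) (1/32)) as [H1|H1].
    + specialize (HB w Hw0 H1). rewrite pow_1 in HB. nra.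
    + specialize (HA w H1 Hy Hx). nra.
Qed.

Lemma sin_Rabs phi : Rabs phi <= PI -> sin (Rabs phi) = Rabs (sin phi).
Proof.
  intro H. destruct (Rcase_abs phi) as [Hn|Hp].
  - rewrite Rabs_left in * by auto. rewrite sin_neg.
    assert (0 <= sin (- phi)) by (apply sin_ge_0; lra). rewrite sin_neg in *.
    rewrite Rabs_left1; lra.
  - rewrite Rabs_right in * by auto. rewrite Rabs_right; auto. apply Rle_ge, sin_ge_0; lra.
Qed.

(* The contour lies in the closed sector |arg z| <= theta, i.e. its points satisfy
   Re z * sin theta >= |Im z| * cos theta; on the arc this is sin(theta - |phi|) >= 0. *)
Lemma contour_in_sector theta kappa z : 0 <= theta <= PI -> 0 <= kappa ->
  GammaC theta kappa z -> cos theta * Rabs (snd z) <= sin theta * fst z.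
Proof.
  intros Ht Hk [[phi [Hphi ->]] | [r [Hr [-> | ->]]]]; simpl.
  - rewrite Rabs_mult, (Rabs_right kappa), <- sin_Rabs, <- (cos_Rabs phi) by lra.
    assert (0 <= sin (theta - Rabs phi))
      by (apply sin_ge_0; pose proof (Rabs_pos phi); lra).
    rewrite sin_minus in *. nra.
  - assert (0 <= sin theta) by (apply sin_ge_0; lra).
    rewrite Rabs_mult, (Rabs_right r), (Rabs_right (sin theta)) by lra. lra.
  - assert (0 <= sin theta) by (apply sin_ge_0; lra).
    rewrite Rabs_Ropp, Rabs_mult, (Rabs_right r), (Rabs_right (sin theta)) by lra. lra.
Qed.

Lemma contour_nonzero theta kappa z : 0 < sin theta -> 0 < kappa ->
  GammaC theta kappa z -> z <> RtoC 0.
Proof.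
  intros Hs Hk [[phi [_ ->]] | [r [Hr [-> | ->]]]] E; injection E; intros E2 E1.
  - pose proof (sin2_cos2 phi) as H. unfold Rsqr in H.
    assert (kappa * kappa * (sin phi * sin phi + cos phi * cos phi) = 0) by nra.
    rewrite H in *. nra.
  - nra.
  - nra.
Qed.

Lemma scaled_contour theta kappa tau z : PI / 2 < theta < PI -> 0 < kappa -> 0 < tau ->
  GammaCtau theta kappa tau z ->
  let w := Cmult (RtoC tau) z in
  w <> RtoC 0 /\ Rabs (snd w) <= PI /\ PI * cos theta / sin theta <= fst w.
Proof.
  intros Ht Hk Htau [HG Hz] w.
  assert (Hsin : 0 < sin theta) by (apply sin_gt_0; lra).
  assert (Hcos : cos theta < 0) by (apply cos_lt_0; lra).
  assert (Hsec := contour_in_sector theta kappa z ltac:(lra) ltac:(lra) HG).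
  assert (Hfst : fst w = tau * fst z) by (unfold w; simpl; ring).
  assert (Hsnd : Rabs (snd w) = tau * Rabs (snd z)).
  { unfold w. simpl. rewrite Rmult_0_l, Rplus_0_r, Rabs_mult, Rabs_right; lra. }
  assert (Hy : tau * Rabs (snd z) <= PI).
  { apply Rmult_le_compat_l with (r := tau) in Hz; [|lra].
    replace (tau * (PI / tau)) with PI in Hz by (field; lra). exact Hz. }
  repeat split.
  - unfold w. apply Cmult_neq_0; [apply RtoC_neq; lra | apply (contour_nonzero theta kappa); auto].
  - lra.
  - rewrite Hfst. apply Rmult_le_reg_l with (sin theta); auto.
    replace (sin theta * (PI * cos theta / sin theta)) with (cos theta * PI) by (field; lra).
    assert (cos theta * PI <= cos theta * (tau * Rabs (snd z)))
      by (apply Rmult_le_compat_neg_l; lra).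
    assert (tau * (cos theta * Rabs (snd z)) <= tau * (sin theta * fst z))
      by (apply Rmult_le_compat_l; lra).
    lra.
Qed.

Lemma gamma_scaling l tau z : 0 < tau -> z <> RtoC 0 ->
  Cminus (Cmult (Cdiv (gamma l (Cexp (Cmult (RtoC (- tau)) z))) (RtoC (INR (fact l))))
                (RtoC (tau ^ S l)))
         (Cinv (Cpow z (S l)))
  = Cmult (RtoC (tau ^ S l)) (errF l (Cmult (RtoC tau) z)).
Proof.
  intros Htau Hz.
  replace (Cexp (Cmult (RtoC (- tau)) z)) with (expNeg 1 (Cmult (RtoC tau) z))
    by (unfold expNeg; f_equal; change (INR 1) with 1; apply injective_projections; simpl; ring).
  unfold errF. rewrite Cpow_mult_l, <- RtoC_pow.
  pose proof (Cpow_nz _ (S l) Hz). pose proof (RtoC_neq _ (INR_fact_neq_0 l)).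
  assert (RtoC (tau ^ S l) <> RtoC 0) by (apply RtoC_neq; apply pow_nonzero; lra).
  field. auto.
Qed.

Theorem lemma3p2 :
  forall k : nat, (1 <= k <= 6)%nat ->
  exists theta0 : R, PI / 2 < theta0 /\
  forall theta kappa : R, PI / 2 < theta < theta0 -> theta < PI -> 0 < kappa ->
  forall l : nat, (l <= 2 * k)%nat ->
  exists c : R, 0 < c /\
  forall tau : R, 0 < tau ->
  forall z : C, GammaCtau theta kappa tau z ->
    Cmod (Cminus (Cmult (Cdiv (gamma l (Cexp (Cmult (RtoC (- tau)) z))) (RtoC (INR (fact l))))
                        (RtoC (tau ^ (S l))))
                 (Cinv (Cpow z (S l))))
    <= (if (Nat.eqb l 0 || Nat.odd l)%bool
        then c * tau ^ (S l)
        else c * tau ^ (S (S l)) * Cmod z).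
Proof.
  intros k Hk. exists PI. split; [apply PI2_Rlt_PI|].
  intros theta kappa [Ht1 _] Ht2 Hkap l Hl.
  assert (Hsin : 0 < sin theta) by (apply sin_gt_0; lra).
  assert (Hcos : cos theta < 0) by (apply cos_lt_0; lra).
  set (a := - (PI * cos theta / sin theta)).
  assert (Ha : 0 <= a).
  { unfold a, Rdiv. pose proof PI_RGT_0. pose proof (Rinv_0_lt_compat _ Hsin).
    assert (PI * cos theta < 0) by nra. nra. }
  destruct (errF_bound l a ltac:(lia) Ha) as [C [HC Hbound]].
  exists C. split; auto. intros tau Htau z Hz.
  destruct (scaled_contour theta kappa tau z ltac:(lra) Hkap Htau Hz) as [Hw0 [Hy Hx]].
  assert (Hz0 : z <> RtoC 0) by (intro E; apply Hw0; rewrite E; ring).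
  specialize (Hbound _ Hw0 Hy ltac:(unfold a; lra)).
  assert (Htl : 0 < tau ^ S l) by (apply pow_lt; lra).
  rewrite gamma_scaling, Cmod_mult, Cmod_R, Rabs_right by (auto; lra).
  rewrite Cmod_mult, Cmod_R, Rabs_right in Hbound by lra.
  destruct (Nat.eqb l 0 || Nat.odd l)%bool.
  - rewrite (Rmult_comm C). apply Rmult_le_compat_l; lra.
  - replace (C * tau ^ S (S l) * Cmod z) with (tau ^ S l * (C * (tau * Cmod z))) by (simpl; ring).
    apply Rmult_le_compat_l; lra.
Qed.
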